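(* Let $E$ be a reflexive para-Hilbert space and let $\Psi_{X_E}\colon X_E\to X_E''$, $\Psi_{Y_E}\colon Y_E\to Y_E''$ be the canonical embeddings. Then $K_E:=J_E'\,\Psi_{Y_E}\colon Y_E\to X_E'$ is the unique isomorphism of Banach spaces satisfying $K_E\circ j_E=i_E'\circ I_E$. Moreover, $K_E'\,\Psi_{X_E}=J_E$.
   Context: A para-Hilbert space $E$ consists of Banach spaces $X_E,Y_E$, a Hilbert space $H_E$ with inner product and Riesz isomorphism $I_E\colon H_E\to H_E'$, bounded linear injections with dense image $i_E\colon X_E\to H_E$, $j_E\colon H_E\to Y_E$, and an isomorphism of Banach spaces $J_E\colon X_E\to Y_E'$ such that $j_E'\circ J_E=I_E\circ i_E$; here $Z'$ denotes the dual of a Banach space $Z$ and $T'$ the dual operator of $T$. $E$ is reflexive if $Y_E$ is a reflexive Banach space. *)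

From HB Require Import structures.
From mathcomp Require Import all_boot all_order all_algebra.
From mathcomp Require Import all_classical all_reals all_analysis.
Set Implicit Arguments. Unset Strict Implicit. Unset Printing Implicit Defensive.
Import Order.TTheory GRing.Theory Num.Theory.
Local Open Scope classical_set_scope.
Local Open Scope ring_scope.

Section ParaHilbert.
Variable R : realType.

Definition bounded_linear_functional (V : normedModType R) (f : V -> R) :=
  (forall (a : R) (x y : V), f (a *: x + y) = a * f x + f y) /\
  (exists C : R, forall x : V, `|f x| <= C * `|x|).

(** The (topological) dual V' : continuous = bounded linear functionals. *)
Record dual (V : normedModType R) := Dual {
  dual_fun :> V -> R;
  dual_funP : bounded_linear_functional dual_fun }.

Definition dnorm (V : normedModType R) (f : dual V) : R :=
  sup [set `|f x| | x in [set x : V | `|x| <= 1]].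

(** Linearity / boundedness of a functional on V' (i.e. membership in V''),
    stated without pointwise operations on the record type [dual V]. *)
Definition dual_linear (V : normedModType R) (phi : dual V -> R) :=
  forall (a : R) (f g h : dual V), (forall x, h x = a * f x + g x) ->
    phi h = a * phi f + phi g.

Definition bidual_elt (V : normedModType R) (phi : dual V -> R) :=
  dual_linear phi /\ (exists C : R, forall f, `|phi f| <= C * dnorm f).

Definition canon_emb (V : normedModType R) (v : V) : dual V -> R := fun f => f v.

Definition dualop (A B : Type) (T : A -> B) (phi : B -> R) : A -> R := phi \o T.

Definition reflexive_banach (V : normedModType R) :=
  forall phi : dual V -> R, bidual_elt phi -> exists v : V, phi = canon_emb v.

Definition dual_iso (W V : normedModType R) (K : W -> dual V) :=
  (forall (a : R) (w1 w2 : W) (v : V), K (a *: w1 + w2) v = a * K w1 v + K w2 v) /\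
  (exists C : R, forall w, dnorm (K w) <= C * `|w|) /\
  (exists G : dual V -> W,
     cancel K G /\ cancel G K /\ exists D : R, forall f, `|G f| <= D * dnorm f).

Definition bli_dense (A B : normedModType R) (T : A -> B) :=
  (forall (a : R) (x y : A), T (a *: x + y) = a *: T x + T y) /\
  (exists C : R, forall x, `|T x| <= C * `|x|) /\
  injective T /\ dense (range T).

Definition is_inner (H : normedModType R) (inner : H -> H -> R) :=
  (forall h k, inner h k = inner k h) /\
  (forall (a : R) (h1 h2 k : H), inner (a *: h1 + h2) k = a * inner h1 k + inner h2 k) /\
  (forall h, inner h h = `|h| ^+ 2).

Definition para_hilbert (X Y H : completeNormedModType R)
  (inner : H -> H -> R) (I : H -> dual H) (i : X -> H) (j : H -> Y)
  (J : X -> dual Y) :=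
  is_inner inner /\
  (forall h k, I h k = inner h k) /\
  bli_dense i /\ bli_dense j /\
  dual_iso J /\
  (forall x, (I (i x) : H -> R) = dualop j (J x)).

End ParaHilbert.

From HB Require Import structures.
From mathcomp Require Import all_boot all_order all_algebra.
From mathcomp Require Import all_classical all_reals all_analysis.
From mathcomp Require Import lra ring.

Set Implicit Arguments.
Unset Strict Implicit.
Unset Printing Implicit Defensive.
Import Order.TTheory GRing.Theory Num.Theory.
Local Open Scope classical_set_scope.
Local Open Scope ring_scope.

(* K_E y is the functional x |-> J_E x y; it is bounded and linear because
   J_E is, and it is onto X' because Y_E is reflexive: g in X' is K_E y for
   the y representing the element f |-> g (J_E^-1 f) of Y''.  Injectivity
   and the bound on the inverse come from norming functionals (Hahn-Banach,
   obtained by Zorn's lemma on graphs of partial functionals dominated by the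
   norm), since f y = K_E y (J_E^-1 f) for every f in Y'.  The identity
   K_E j_E = i_E' I_E is the compatibility j_E' J_E = I_E i_E read through the
   symmetry of the inner product, and uniqueness holds because two bounded
   linear maps that agree on the dense range of j_E agree everywhere. *)

Lemma ex_nonneg_bound (R : realDomainType) (T : Type) (a b : T -> R) :
  (forall t, 0 <= b t) -> (exists C, forall t, a t <= C * b t) ->
  exists2 C, 0 <= C & forall t, a t <= C * b t.
Proof.
move=> b_ge0 [C aC]; exists `|C| => // t.
exact: le_trans (aC t) (ler_wpM2r (b_ge0 t) (ler_norm C)).
Qed.

Section DualSpace.
Variables (R : realType) (V : normedModType R).
Implicit Types (f g : dual V) (x y : V).

Lemma dual_ext f g : f =1 g -> f = g.
Proof.
case: f g => f fP [g gP] /= /funext fg; subst g.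
by congr Dual; exact: Prop_irrelevance.
Qed.

Lemma dual_linear f (a : R) x y : f (a *: x + y) = a * f x + f y.
Proof. by case: (dual_funP f) => f_lin _; exact: f_lin. Qed.

Lemma dual0 f : f 0 = 0.
Proof. by have := dual_linear f 1 0 0; rewrite scale1r addr0 mul1r; lra. Qed.

Lemma dualZ f (a : R) x : f (a *: x) = a * f x.
Proof. by rewrite -[a *: x]addr0 dual_linear dual0 addr0. Qed.

Lemma dualB f x y : f (x - y) = f x - f y.
Proof. by rewrite addrC -scaleN1r dual_linear mulN1r addrC. Qed.

Lemma has_ubound_dnorm f : has_ubound [set `|f x| | x in [set x | `|x| <= 1]].
Proof.
have [_ [C fC]] := dual_funP f; exists `|C| => _ [x /= x_le1 <-].
apply: le_trans (fC x) _; apply: le_trans (ler_wpM2r _ (ler_norm C)) _ => //.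
by rewrite -[leRHS]mulr1 ler_wpM2l.
Qed.

Lemma dnorm_ge0 f : 0 <= dnorm f.
Proof.
apply: le_trans (normr_ge0 (f 0)) _.
by apply: ub_le_sup; [exact: has_ubound_dnorm | exists 0; rewrite /= ?normr0].
Qed.

Lemma dual_le_dnorm f x : `|f x| <= dnorm f * `|x|.
Proof.
have [->|x_neq0] := eqVneq x 0; first by rewrite dual0 !normr0 mulr0.
have x_gt0 : 0 < `|x| by rewrite normr_gt0.
rewrite -[x in f x](scalerKV (lt0r_neq0 x_gt0)) dualZ normrM gtr0_norm // mulrC.
apply: ler_wpM2r; first exact: ltW.
apply: ub_le_sup; first exact: has_ubound_dnorm.
by exists (`|x|^-1 *: x) => //=; rewrite normrZ normfV normr_id mulVf ?gt_eqF.
Qed.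

Lemma dnorm_le f (B : R) : (forall x, `|x| <= 1 -> `|f x| <= B) -> dnorm f <= B.
Proof.
move=> fB; apply: ge_sup; first by exists `|f 0|, 0; rewrite /= ?normr0.
by move=> _ [x /= x_le1 <-]; exact: fB.
Qed.

End DualSpace.

Section NormingFunctional.
Variables (R : realType) (V : normedModType R).
Implicit Types (G M : set (V * R)) (v x : V).

Definition linear_graph G :=
  forall (s : R) p q, G p -> G q -> G (s *: p.1 + q.1, s * p.2 + q.2).

Definition norm_dominated G := forall p, G p -> p.2 <= `|p.1|.

Definition norming_ray v : set (V * R) := [set (t *: v, t * `|v|) | t in [set: R]].

Definition norming_graph v G :=
  [/\ linear_graph G, norm_dominated G & norming_ray v `<=` G].

Lemma linear_graph0 G p : linear_graph G -> G p -> G (0, 0).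
Proof. by move=> G_lin Gp; have := G_lin (-1) _ _ Gp Gp; rewrite scaleN1r mulN1r !addNr. Qed.

Lemma dominated_graph_functional G x (a b : R) :
  linear_graph G -> norm_dominated G -> G (x, a) -> G (x, b) -> a = b.
Proof.
move=> G_lin G_dom Ga Gb.
have := G_dom _ (G_lin (-1) _ _ Ga Gb); have := G_dom _ (G_lin (-1) _ _ Gb Ga).
rewrite /= scaleN1r addNr normr0; lra.
Qed.

Lemma norming_graph_ray v : norming_graph v (norming_ray v).
Proof.
split=> //.
- move=> s _ _ [t _ <-] [u _ <-]; exists (s * t + u) => //=.
  by rewrite scalerDl scalerA mulrDl mulrA.
- by move=> _ [t _ <-] /=; rewrite normrZ ler_wpM2r // ler_norm.
Qed.

Lemma exists_maximal_norming_graph v :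
  exists M, norming_graph v M /\ forall G, M `<` G -> ~ norming_graph v G.
Proof.
(* Zorn_bigcup also requires the union of the empty chain, set0, to qualify. *)
have [M [[M0|M_norming] M_max]] : exists M, (M = set0 \/ norming_graph v M) /\
    forall G, M `<` G -> ~ (G = set0 \/ norming_graph v G).
  apply: Zorn_bigcup => F F_norming F_chain.
  have [->|/set0P[p [G FG Gp]]] := eqVneq (\bigcup_(G in F) G) set0; first by left.
  have chain_norming G' q : F G' -> G' q -> norming_graph v G'.
    by move=> FG' G'q; case: (F_norming G' FG') => // G'0; rewrite G'0 in G'q.
  right; split.
  - move=> s p1 p2 [G1 FG1 G1p1] [G2 FG2 G2p2].
    have [G12|G21] := F_chain G1 G2 FG1 FG2.
    + have [G2_lin _ _] := chain_norming G2 p2 FG2 G2p2.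
      by exists G2 => //; exact: G2_lin (G12 _ G1p1) G2p2.
    + have [G1_lin _ _] := chain_norming G1 p1 FG1 G1p1.
      by exists G1 => //; exact: G1_lin G1p1 (G21 _ G2p2).
  - move=> q [G' FG' G'q].
    by have [_ G'_dom _] := chain_norming G' q FG' G'q; exact: G'_dom.
  - by have [_ _ G_ray] := chain_norming G p FG Gp; move=> q /G_ray Gq; exists G.
- exfalso; apply: (M_max (norming_ray v)); last by right; exact: norming_graph_ray.
  by rewrite M0; split=> // /(_ (0 *: v, 0 * `|v|)); apply; exists 0.
- by exists M; split=> // G MG G_norming; apply: M_max MG _; right.
Qed.

Section Extension.
Variables (M : set (V * R)) (x : V).
Hypotheses (M_lin : linear_graph M) (M_dom : norm_dominated M) (M00 : M (0, 0)).

(* The value c at x must lie between these two families of bounds, which are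
   compatible by the triangle inequality. *)
Lemma extension_constant : exists c : R,
  (forall y b, M (y, b) -> b - `|y - x| <= c) /\
  (forall z d, M (z, d) -> c <= `|z + x| - d).
Proof.
have bound y b z d : M (y, b) -> M (z, d) -> b + d <= `|y - x| + `|z + x|.
  move=> My Mz; have := M_dom (M_lin 1 My Mz).
  rewrite /= scale1r mul1r => /le_trans; apply.
  by rewrite [y + z](_ : _ = (y - x) + (z + x)) ?ler_normD // addrACA addNr addr0.
pose S := [set p.2 - `|p.1 - x| | p in M].
have S_ub : ubound S `|x|.
  by move=> _ [[y b] My <-] /=; have := bound y b 0 0 My M00; rewrite add0r; lra.
exists (sup S); split.
- by move=> y b My; apply: ub_le_sup; [exists `|x| | exists (y, b)].
- move=> z d Mz; apply: ge_sup; first by exists (0 - `|0 - x|), (0, 0).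
  by move=> _ [[y b] My <-] /=; have := bound y b z d My Mz; lra.
Qed.

Variable c : R.

Definition extend_graph : set (V * R) :=
  [set p | exists y b t, M (y, b) /\ p = (y + t *: x, b + t * c)].

Lemma sub_extend_graph : M `<=` extend_graph.
Proof. by move=> [y b] My; exists y, b, 0; rewrite scale0r mul0r !addr0. Qed.

Lemma extend_graph_new : extend_graph (x, c).
Proof. by exists 0, 0, 1; rewrite scale1r mul1r !add0r. Qed.

Lemma extend_graph_linear : linear_graph extend_graph.
Proof.
move=> s _ _ [y [b [t [My ->]]]] [z [d [u [Mz ->]]]] /=.
exists (s *: y + z), (s * b + d), (s * t + u); split; first exact: M_lin My Mz.
by congr (_, _); [rewrite scalerDr scalerDl scalerA addrACA | ring].
Qed.

Lemma extend_graph_dominated :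
  (forall y b, M (y, b) -> b - `|y - x| <= c) ->
  (forall z d, M (z, d) -> c <= `|z + x| - d) ->
  norm_dominated extend_graph.
Proof.
move=> c_lo c_hi _ [y [b [t [My ->]]]] /=.
have M_scaled s : M (s *: y, s * b) by have := M_lin s My M00; rewrite !addr0.
have [->|t_neq0] := eqVneq t 0; first by rewrite scale0r mul0r !addr0; exact: M_dom My.
have -> : `|y + t *: x| = `|t| * `|t^-1 *: y + x|.
  by rewrite -normrZ scalerDr scalerA mulfV // scale1r.
have -> : b + t * c = t * (t^-1 * b + c) by rewrite mulrDr mulrA mulfV // mul1r.
set w := `|t^-1 *: y + x|.
move: t_neq0; rewrite neq_lt => /orP[t_lt0|t_gt0].
- by have := c_lo _ _ (M_scaled (- t^-1)); rewrite scaleNr -opprD normrN -/w ltr0_norm //; nra.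
- by have := c_hi _ _ (M_scaled t^-1); rewrite -/w gtr0_norm //; nra.
Qed.

End Extension.

Lemma maximal_norming_graph_total v M : norming_graph v M ->
  (forall G, M `<` G -> ~ norming_graph v G) -> forall x, exists a, M (x, a).
Proof.
move=> [M_lin M_dom M_ray] M_max x; apply: contrapT => /forallNP Mx.
have M00 : M (0, 0) by apply: linear_graph0 M_lin (M_ray _ _); exists 0.
have [c [c_lo c_hi]] := extension_constant x M_lin M_dom M00.
apply: (M_max (extend_graph M x c)); split.
- exact: sub_extend_graph.
- by move=> /(_ _ (extend_graph_new x M00 c)); exact: Mx.
- exact: extend_graph_linear.
- exact: extend_graph_dominated.
- exact: subset_trans M_ray (sub_extend_graph x c).
Qed.

Lemma exists_norming_functional v : exists f : dual V, dnorm f <= 1 /\ f v = `|v|.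
Proof.
have [M [M_norming M_max]] := exists_maximal_norming_graph v.
have /(_ _)/cid M_total := maximal_norming_graph_total M_norming M_max.
have [M_lin M_dom M_ray] := M_norming.
pose f x := projT1 (M_total x).
have Mf x : M (x, f x) := projT2 (M_total x).
have Mf_eq x a : M (x, a) -> a = f x.
  by move=> Mxa; exact: dominated_graph_functional M_lin M_dom Mxa (Mf x).
have f_lin (a : R) x y : f (a *: x + y) = a * f x + f y.
  by apply/esym/Mf_eq; exact: M_lin (Mf x) (Mf y).
have f_le1 x : `|f x| <= `|x|.
  have M00 : M (0, 0) := linear_graph0 M_lin (Mf 0).
  have /Mf_eq fN : M (- x, - f x).
    by have := M_lin (-1) _ _ (Mf x) M00; rewrite /= scaleN1r mulN1r !addr0.
  have := M_dom _ (Mf (- x)); rewrite /= normrN -fN => fN_le.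
  by rewrite ler_norml lerNl fN_le; exact: M_dom (Mf x).
have f_bounded : bounded_linear_functional f by split=> //; exists 1 => x; rewrite mul1r.
exists (Dual f_bounded); split; first by apply: dnorm_le => x; exact: le_trans (f_le1 x).
by apply/esym/Mf_eq; apply: M_ray; exists 1; rewrite ?scale1r ?mul1r.
Qed.

Lemma norm_le_dual v (B : R) : (forall f : dual V, dnorm f <= 1 -> f v <= B) -> `|v| <= B.
Proof. by move=> fB; have [f [f_le1 <-]] := exists_norming_functional v; exact: fB. Qed.

Lemma dual_separates x y : (forall f : dual V, f x = f y) -> x = y.
Proof.
move=> fxy; apply/eqP; rewrite -subr_eq0 -normr_le0.
by apply: norm_le_dual => f _; rewrite dualB fxy subrr.
Qed.

End NormingFunctional.

Section DenseRange.
Variable R : realType.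

Definition bounded_linear_dual_map (Z W : normedModType R) (K : Z -> dual W) :=
  (forall (a : R) (z1 z2 : Z) (w : W), K (a *: z1 + z2) w = a * K z1 w + K z2 w) /\
  (exists C : R, forall z, dnorm (K z) <= C * `|z|).

Lemma linear_bounded_eq0_on_dense (Z : normedModType R) (phi : Z -> R) (D : set Z) :
  dense D -> (forall (a : R) z1 z2, phi (a *: z1 + z2) = a * phi z1 + phi z2) ->
  (exists C, forall z, `|phi z| <= C * `|z|) -> (forall z, D z -> phi z = 0) ->
  forall z, phi z = 0.
Proof.
move=> D_dense phi_lin phi_bd phiD z.
have [C C_ge0 phiC] := ex_nonneg_bound (@normr_ge0 _ _) phi_bd.
have C1_gt0 : 0 < C + 1 by rewrite ltr_wpDl.
apply/eqP; rewrite -normr_le0; apply/ler_addgt0Pr => e e_gt0; rewrite add0r.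
have r_gt0 : 0 < e / (C + 1) by rewrite divr_gt0.
have [d [zd Dd]] :=
  D_dense (ball z (e / (C + 1))) (ex_intro _ z (ballxx z r_gt0)) (ball_open z _).
move: zd; rewrite -ball_normE /ball_ /= => zd.
have := phi_lin 1 (z - d) d; rewrite scale1r mul1r subrK (phiD d Dd) addr0 => ->.
apply: le_trans (phiC _) _; rewrite -(divfK (lt0r_neq0 C1_gt0) e) mulrC.
by apply: ler_pM => //; [exact: ltW | rewrite lerDl].
Qed.

Lemma eq_bounded_linear_dual_maps (Z W : normedModType R) (K1 K2 : Z -> dual W) (D : set Z) :
  dense D -> bounded_linear_dual_map K1 -> bounded_linear_dual_map K2 ->
  (forall z, D z -> K1 z = K2 z) -> K1 = K2.
Proof.
move=> D_dense [K1_lin K1_bd] [K2_lin K2_bd] K12D; apply: funext => z.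
apply: dual_ext => w; apply/eqP; rewrite -subr_eq0; apply/eqP; move: z.
apply: (linear_bounded_eq0_on_dense (phi := fun z => K1 z w - K2 z w) D_dense).
- by move=> a z1 z2; rewrite K1_lin K2_lin; ring.
- have [C1 C1_ge0 K1C] := ex_nonneg_bound (@normr_ge0 _ _) K1_bd.
  have [C2 C2_ge0 K2C] := ex_nonneg_bound (@normr_ge0 _ _) K2_bd.
  have K_le C (K : Z -> dual W) z : (forall z, dnorm (K z) <= C * `|z|) ->
      `|K z w| <= C * `|z| * `|w|.
    by move=> KC; exact: le_trans (dual_le_dnorm _ _) (ler_wpM2r _ (KC z)).
  exists ((C1 + C2) * `|w|) => z; apply: le_trans (ler_normB _ _) _.
  apply: le_trans (lerD (K_le _ _ z K1C) (K_le _ _ z K2C)) _.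
  by rewrite [leRHS](_ : _ = C1 * `|z| * `|w| + C2 * `|z| * `|w|) //; ring.
- by move=> z Dz; rewrite K12D // subrr.
Qed.

End DenseRange.

Section DualIsoTranspose.
Variables (R : realType) (X Y : normedModType R) (J : X -> dual Y).
Hypothesis J_iso : dual_iso J.

Lemma dual_iso_transpose_subproof (y : Y) : bounded_linear_functional (fun x => J x y).
Proof.
have [J_lin [J_bd _]] := J_iso.
have [C C_ge0 JC] := ex_nonneg_bound (@normr_ge0 _ _) J_bd.
split; first by move=> a x1 x2; exact: J_lin.
exists (C * `|y|) => x; apply: le_trans (dual_le_dnorm _ _) _.
by rewrite mulrAC ler_wpM2r.
Qed.

Definition dual_iso_transpose (y : Y) : dual X := Dual (dual_iso_transpose_subproof y).
Local Notation K := dual_iso_transpose.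

Lemma dual_iso_transpose_bounded_linear : bounded_linear_dual_map K.
Proof.
have [J_lin [J_bd _]] := J_iso.
have [C C_ge0 JC] := ex_nonneg_bound (@normr_ge0 _ _) J_bd.
split; first by move=> a y1 y2 x; exact: dual_linear.
exists C => y; apply: dnorm_le => x x_le1 /=.
apply: le_trans (dual_le_dnorm _ _) _; apply: ler_wpM2r => //.
by apply: le_trans (JC x) _; rewrite -[leRHS]mulr1 ler_wpM2l.
Qed.

Lemma dual_iso_transpose_inj : injective K.
Proof.
have [_ [_ [G [_ [GK _]]]]] := J_iso.
move=> y y' Kyy'; apply: dual_separates => f; rewrite -(GK f).
exact: (congr1 (fun g : dual X => g (G f)) Kyy').
Qed.

Lemma dual_iso_transpose_norm_le : exists2 D, 0 <= D & forall y, `|y| <= D * dnorm (K y).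
Proof.
have [_ [_ [G [_ [GK G_bd]]]]] := J_iso.
have [D D_ge0 GD] := ex_nonneg_bound (@dnorm_ge0 _ _) G_bd.
exists D => // y; apply: norm_le_dual => f f_le1; rewrite -(GK f).
apply: le_trans (ler_norm _) _; apply: le_trans (dual_le_dnorm (K y) (G f)) _.
rewrite mulrC ler_wpM2r ?dnorm_ge0 //.
by apply: le_trans (GD f) _; rewrite -[leRHS]mulr1 ler_wpM2l.
Qed.

Lemma dual_iso_transpose_surj : reflexive_banach Y -> forall g : dual X, exists y, K y = g.
Proof.
move=> Y_refl g; have [J_lin [_ [G [JK [GK G_bd]]]]] := J_iso.
have G_lin (a : R) (f1 f2 f : dual Y) :
    (forall y, f y = a * f1 y + f2 y) -> G f = a *: G f1 + G f2.
  move=> f_def; apply: (can_inj JK); rewrite GK.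
  by apply: dual_ext => y; rewrite J_lin !GK f_def.
have [D D_ge0 GD] := ex_nonneg_bound (@dnorm_ge0 _ _) G_bd.
have [|y gGy] := Y_refl (fun f => g (G f)).
  split; first by move=> a f1 f2 f /G_lin ->; rewrite dual_linear.
  exists (dnorm g * D) => f; apply: le_trans (dual_le_dnorm g _) _.
  by rewrite -mulrA ler_wpM2l ?dnorm_ge0.
exists y; apply: dual_ext => x /=.
by have := congr1 (fun phi => phi (J x)) gGy; rewrite /canon_emb /= JK => <-.
Qed.

Lemma dual_iso_transpose_iso : reflexive_banach Y -> dual_iso K.
Proof.
move=> Y_refl; have [K_lin K_bd] := dual_iso_transpose_bounded_linear.
have [D D_ge0 KD] := dual_iso_transpose_norm_le.
pose G g := projT1 (cid (dual_iso_transpose_surj Y_refl g)).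
have KG : cancel G K by move=> g; rewrite /G; case: cid.
split=> //; split=> //; exists G; split.
  by move=> y; apply: dual_iso_transpose_inj; rewrite KG.
by split=> //; exists D => g; rewrite -{2}(KG g).
Qed.

End DualIsoTranspose.

Theorem proposition2p12 (R : realType) (X Y H : completeNormedModType R)
    (inner : H -> H -> R) (I : H -> dual H) (i : X -> H) (j : H -> Y)
    (J : X -> dual Y) :
  para_hilbert inner I i j J -> reflexive_banach Y ->
  exists K : Y -> dual X,
    (* K = J' \o Psi_Y *)
    (forall y : Y, (K y : X -> R) = dualop J (canon_emb y)) /\
    (* K is an isomorphism of Banach spaces with K \o j = i' \o I *)
    dual_iso K /\
    (forall h : H, (K (j h) : X -> R) = dualop i (I h)) /\
    (* uniqueness *)
    (forall K2 : Y -> dual X, dual_iso K2 ->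
       (forall h : H, (K2 (j h) : X -> R) = dualop i (I h)) -> K2 = K) /\
    (* K' \o Psi_X = J *)
    (forall x : X, (J x : Y -> R) = dualop K (canon_emb x)).
Proof.
move=> [[inner_sym _] [IE [_ [[_ [_ [_ j_dense]]] [J_iso JI_ij]]]]] Y_refl.
pose K := dual_iso_transpose J_iso.
have Kj h : (K (j h) : X -> R) = dualop i (I h).
  apply: funext => x; rewrite /= -[J x (j h)]/(dualop j (J x) h) -JI_ij /dualop /= !IE.
  exact: inner_sym.
exists K; split=> //; split; first exact: dual_iso_transpose_iso.
split; first exact: Kj.
split=> // K2 [K2_lin [K2_bd _]] K2j.
apply: (eq_bounded_linear_dual_maps j_dense) => //.
  exact: dual_iso_transpose_bounded_linear.
by move=> _ [h _ <-]; apply: dual_ext => x; rewrite K2j Kj.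
Qed.
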